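(* Let $m\ge 1$ and let $\mathbf a=(a_1,\dots,a_m)$ be an admissible sequence. For a nonnegative integer $x$ define the $m\times m$ matrices $$\mathbf m(\mathbf a,x)=\left(\frac{(q^{2i+2x};q^2)_{a_j+1-2i}}{(q;q)_{a_j+1-2i}}\right)_{i,j=1}^m,\qquad \mathbf s(\mathbf a)=\left(\frac{1}{(q;q)_{a_j+1-2i}}\right)_{i,j=1}^m,$$ where in both matrices the $(i,j)$-entry is defined to be $0$ whenever $a_j+1-2i<0$. Then, as an identity of rational functions in $q$, $$\det \mathbf m(\mathbf a,x)=\left(\prod_{k=1}^m (q^{2x+2k};q)_{a_k-2k+1}\right)\det \mathbf s(\mathbf a).$$
   Context: $q$ is an indeterminate. For integers $n\ge 0$, $(a;q)_n=\prod_{j=0}^{n-1}(1-aq^j)$ (so $(a;q)_0=1$). A finite sequence of integers $\mathbf a=(a_1,\dots,a_m)$ is called admissible if it is strictly increasing and $2i-1\le a_i\le 2m$ for all $1\le i\le m$. *)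

From HB Require Import structures.
From mathcomp Require Import all_boot all_order all_algebra.
Set Implicit Arguments. Unset Strict Implicit. Unset Printing Implicit Defensive.
Import Order.TTheory GRing.Theory Num.Theory.
Local Open Scope ring_scope.

Definition RF := {fraction {poly rat}}.
Definition qv : RF := tofrac ('X : {poly rat}).

Definition qpoch (a b : RF) (n : nat) : RF := \prod_(j < n) (1 - a * b ^+ j).

(* Admissible sequence a = (a_1,...,a_m), stored 0-indexed as a : 'I_m -> int:
   strictly increasing and 2i-1 <= a_i <= 2m for 1 <= i <= m. *)
Definition admissible (m : nat) (a : 'I_m -> int) : Prop :=
  (forall i j : 'I_m, (i < j)%N -> a i < a j) /\
  (forall i : 'I_m, (2 * (i.+1)%:Z - 1 <= a i) /\ (a i <= 2 * m%:Z)).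

(* Exponent a_j + 1 - 2i with 1-based indices i = i0+1, j = j0+1. *)
Definition expo (m : nat) (a : 'I_m -> int) (i j : 'I_m) : int :=
  a j + 1 - 2 * (i.+1)%:Z.

Definition mmat (m : nat) (a : 'I_m -> int) (x : nat) : 'M[RF]_m :=
  \matrix_(i < m, j < m)
    (if expo a i j < 0 then 0
     else qpoch (qv ^+ (2 * i.+1 + 2 * x)) (qv ^+ 2) (absz (expo a i j))
          / qpoch qv qv (absz (expo a i j))).

Definition smat (m : nat) (a : 'I_m -> int) : 'M[RF]_m :=
  \matrix_(i < m, j < m)
    (if expo a i j < 0 then 0 else (qpoch qv qv (absz (expo a i j)))^-1).

From HB Require Import structures.
From mathcomp Require Import all_boot all_order all_algebra.
From mathcomp Require Import ring zify.
Import Order.TTheory GRing.Theory Num.Theory.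
Set Implicit Arguments. Unset Strict Implicit. Unset Printing Implicit Defensive.
Local Open Scope ring_scope.

(* Write z for q^(2x) and regard m(a, x) as a matrix M(z) of polynomials in z
   over RF; then s(a) = M(0).  A three-term contiguity relation for the
   entries (term_contiguity) says that multiplying column j of M(z) by
   (1 - z q^(a_j+1)) (1 - z q^(a_j+2)) amounts to applying to M(z q^2) an upper
   bidiagonal row operation with diagonal (1 - z q^(2i)) (1 - z q^(2i+1)); the
   bound a_j <= 2m makes the contribution of a virtual row m+1 vanish.
   Taking determinants, D = det M solves a q-difference equation
     D(z) C(z) = L(z) D(z q^2),   C(0) = L(0) = 1,
   which the product P(z) = prod_k (z q^(2k); q)_(a_k+1-2k) solves as well
   (this uses a_k >= 2k-1).  As q^2 is not a root of unity, a polynomial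
   solution is determined by its constant term (qdiff_eq_unique), so
   D(z) = P(z) D(0), and evaluating at z = q^(2x) gives the theorem. *)

Section QPochhammer.
Variable R : comNzRingType.

Definition qp (a b : R) (n : nat) : R := \prod_(j < n) (1 - a * b ^+ j).

Lemma qp0 (a b : R) : qp a b 0 = 1.
Proof. by rewrite /qp big_ord0. Qed.

Lemma qp_zero (b : R) n : qp 0 b n = 1.
Proof. by rewrite /qp big1 // => j _; rewrite mul0r subr0. Qed.

Lemma qpS (a b : R) n : qp a b n.+1 = (1 - a) * qp (a * b) b n.
Proof.
rewrite /qp big_ord_recl /= expr0 mulr1; congr (_ * _).
by apply: eq_bigr => j _; rewrite /bump /= exprS mulrA.
Qed.

Lemma qpSr (a b : R) n : qp a b n.+1 = qp a b n * (1 - a * b ^+ n).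
Proof. by rewrite /qp big_ord_recr. Qed.

Lemma qp_shift2 (w b : R) n :
  qp w b n * ((1 - w * b ^+ n) * (1 - w * b ^+ n.+1)) =
  (1 - w) * (1 - w * b) * qp (w * b ^+ 2) b n.
Proof.
rewrite mulrA -!qpSr !qpS mulrA.
by rewrite expr2 mulrA.
Qed.

End QPochhammer.

Lemma rmorph_qp (R S : comNzRingType) (f : {rmorphism R -> S}) (a b : R) n :
  f (qp a b n) = qp (f a) (f b) n.
Proof.
rewrite rmorph_prod; apply: eq_bigr => j _.
by rewrite rmorphB rmorph1 rmorphM rmorphXn.
Qed.

Section Contiguity.
Variables (R : comNzRingType) (t : R) (K : nat -> R).

(* K behaves like 1/(t;t)_n: K n = K (n+2) (1 - t^(n+1)) (1 - t^(n+2)). *)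
Hypothesis K_rec : forall p, K p = K p.+2 * ((1 - t ^+ p.+1) * (1 - t ^+ p.+2)).

Definition term (w : R) (n : nat) : R := qp w (t ^+ 2) n * K n.

Lemma term_contiguity w n :
  term w n * ((1 - w * t ^+ n) * (1 - w * t ^+ n.+1)) =
  (1 - w) * (1 - w * t) * term (w * t ^+ 2) n +
  (1 - w) * (1 - w * t ^+ 2) * (w * t) *
    (if (n < 2)%N then 0 else term (w * t ^+ 2 * t ^+ 2) (n - 2)).
Proof.
rewrite /term; case: n => [|[|p]] /=.
- by rewrite !qp0 expr0 expr1 mulr1; ring.
- by rewrite !qpS !qp0 expr1 expr2; ring.
rewrite subn2 /= [qp (w * _) _ p.+2]qpSr !qpS (K_rec p).
have -> : t ^+ p.+2 = t ^+ p * t ^+ 2 by rewrite -exprD addnC.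
have -> : t ^+ p.+3 = t ^+ p * t ^+ 3 by rewrite -exprD addnC.
have -> : t ^+ p.+1 = t ^+ p * t by rewrite exprSr.
have -> : (t ^+ 2) ^+ p.+1 = t ^+ p * t ^+ p * t ^+ 2.
  by rewrite exprSr -exprM mulnC exprM expr2.
move: (qp _ _ p) (K p.+2) (t ^+ p) => B C s.
ring.
Qed.

(* Matrix entry with row index i and column parameter A (standing for a_j):
   (z t^(2i); t^2)_(A+1-2i) K(A+1-2i), and 0 when A+1-2i < 0. *)
Definition entry (z : R) (i A : nat) : R :=
  if (A.+1 < 2 * i)%N then 0 else term (z * t ^+ (2 * i)) (A.+1 - 2 * i).

(* Factor attached to column A, and diagonal / superdiagonal coefficients of
   the row operation relating z to z t^2. *)
Definition col_factor (z : R) (A : nat) : R :=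
  (1 - z * t ^+ A.+1) * (1 - z * t ^+ A.+2).
Definition diag_coef (z : R) (i : nat) : R :=
  (1 - z * t ^+ (2 * i)) * (1 - z * t ^+ (2 * i).+1).
Definition super_coef (z : R) (i : nat) : R :=
  (1 - z * t ^+ (2 * i)) * (1 - z * t ^+ (2 * i).+2) * (z * t ^+ (2 * i).+1).

Lemma entry_contiguity z i A :
  entry z i A * col_factor z A =
  diag_coef z i * entry (z * t ^+ 2) i A + super_coef z i * entry (z * t ^+ 2) i.+1 A.
Proof.
rewrite /entry; case: ltnP => h.
  have -> : (A.+1 < 2 * i.+1)%N by lia.
  by rewrite !mul0r !mulr0 addr0.
set n := (A.+1 - 2 * i)%N.
have hA : A.+1 = (n + 2 * i)%N by rewrite /n; lia.
have -> : (A.+1 < 2 * i.+1)%N = (n < 2)%N by rewrite /n; lia.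
have -> : (A.+1 - 2 * i.+1)%N = (n - 2)%N by rewrite /n; lia.
rewrite /col_factor /diag_coef /super_coef.
set w := z * t ^+ (2 * i).
have -> : z * t ^+ 2 * t ^+ (2 * i) = w * t ^+ 2 by rewrite mulrAC.
have -> : z * t ^+ 2 * t ^+ (2 * i.+1) = w * t ^+ 2 * t ^+ 2.
  by rewrite /w mulnS addnC exprD; ring.
have -> : z * t ^+ A.+1 = w * t ^+ n by rewrite /w -mulrA -exprD; congr (_ * _ ^+ _); lia.
have -> : z * t ^+ A.+2 = w * t ^+ n.+1 by rewrite /w -mulrA -exprD; congr (_ * _ ^+ _); lia.
have -> : z * t ^+ (2 * i).+1 = w * t by rewrite /w exprSr mulrA.
have -> : z * t ^+ (2 * i).+2 = w * t ^+ 2 by rewrite /w -mulrA -exprD addn2.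
exact: term_contiguity.
Qed.

End Contiguity.

Lemma sum_two_terms (R : comNzRingType) (m i : nat) (u v : R) (F : nat -> R) :
  \sum_(k < m) (if k == i :> nat then u else if k == i.+1 :> nat then v else 0) * F k =
  (if (i < m)%N then u * F i else 0) + (if (i.+1 < m)%N then v * F i.+1 else 0).
Proof.
elim: m => [|m IH]; first by rewrite big_ord0 addr0.
rewrite big_ord_recr /= IH !ltnS.
case: (ltngtP i.+1 m) => h.
- have -> : (i <= m)%N by lia.
  have -> : (m == i) = false by apply/eqP; lia.
  by rewrite mul0r addr0.
- case: (eqVneq m i) => [->|hmi]; first by rewrite leqnn !add0r addr0.
  have -> : (i <= m)%N = false by lia.
  by rewrite mul0r !addr0.
- have -> : (i <= m)%N by lia.
  have -> : (m == i) = false by apply/eqP; lia.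
  by rewrite addr0 h.
Qed.

Section FunctionalEquations.
Variables (R : comNzRingType) (t : R) (K : nat -> R).
Hypothesis K_rec : forall p, K p = K p.+2 * ((1 - t ^+ p.+1) * (1 - t ^+ p.+2)).
Variables (m : nat) (b : 'I_m -> nat).

Definition entry_mx (z : R) : 'M[R]_m := \matrix_(i < m, j < m) entry t K z i.+1 (b j).

Definition bidiag_mx (z : R) : 'M[R]_m :=
  \matrix_(i < m, k < m) (if k == i :> nat then diag_coef t z i.+1
                          else if k == i.+1 :> nat then super_coef t z i.+1 else 0).

Definition prod_factor (z : R) : R :=
  \prod_(k < m) qp (z * t ^+ (2 * k.+1)) t ((b k).+1 - 2 * k.+1).

Lemma det_bidiag_mx z : \det (bidiag_mx z) = \prod_(i < m) diag_coef t z i.+1.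
Proof.
rewrite -det_tr det_trig; last first.
  apply/is_trig_mxP => i j hij; rewrite !mxE.
  have -> : (i == j :> nat) = false by apply/eqP; lia.
  by have -> : (i == j.+1 :> nat) = false by apply/eqP; lia.
by apply: eq_bigr => i _; rewrite !mxE eqxx.
Qed.

Hypothesis b_le : forall j, (b j <= 2 * m)%N.

(* Matrix form of the contiguity relation: column scaling at z is a row
   operation at z t^2.  The bound on b kills the entries of a virtual row m+1. *)
Lemma entry_mx_contiguity z :
  entry_mx z *m diag_mx (\row_j col_factor t z (b j)) = bidiag_mx z *m entry_mx (z * t ^+ 2).
Proof.
apply/matrixP => i j; rewrite mul_mx_diag !mxE.
under eq_bigr do rewrite !mxE.
rewrite (sum_two_terms m i _ _ (fun k => entry t K (z * t ^+ 2) k.+1 (b j))) ltn_ord.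
rewrite (entry_contiguity K_rec); congr (_ + _).
case: ifP => // /negbT; rewrite -leqNgt => hi.
rewrite /entry ifT ?mulr0 //.
by have := b_le j; have := ltn_ord i; lia.
Qed.

Lemma det_entry_mx_funeq z :
  \det (entry_mx z) * \prod_(j < m) col_factor t z (b j) =
  (\prod_(i < m) diag_coef t z i.+1) * \det (entry_mx (z * t ^+ 2)).
Proof.
rewrite -det_bidiag_mx -det_mulmx -entry_mx_contiguity det_mulmx det_diag.
by congr (_ * _); apply: eq_bigr => j _; rewrite mxE.
Qed.

Hypothesis b_ge : forall k : 'I_m, (2 * k.+1 <= (b k).+1)%N.

Lemma prod_factor_funeq z :
  prod_factor z * \prod_(j < m) col_factor t z (b j) =
  (\prod_(i < m) diag_coef t z i.+1) * prod_factor (z * t ^+ 2).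
Proof.
rewrite /prod_factor -!big_split /=; apply: eq_bigr => k _.
set n := ((b k).+1 - 2 * k.+1)%N; set w := z * t ^+ (2 * k.+1).
have hA : (b k).+1 = (n + 2 * k.+1)%N by rewrite /n; have := b_ge k; lia.
rewrite /col_factor /diag_coef.
have -> : z * t ^+ (b k).+1 = w * t ^+ n by rewrite /w -mulrA -exprD; congr (_ * _ ^+ _); lia.
have -> : z * t ^+ (b k).+2 = w * t ^+ n.+1 by rewrite /w -mulrA -exprD; congr (_ * _ ^+ _); lia.
have -> : z * t ^+ (2 * k.+1).+1 = w * t by rewrite /w exprSr mulrA.
have -> : z * t ^+ 2 * t ^+ (2 * k.+1) = w * t ^+ 2 by rewrite /w mulrAC.
exact: qp_shift2.
Qed.

End FunctionalEquations.

Section RingMorphisms.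
Variables (R S : comNzRingType) (f : {rmorphism R -> S}).
Variables (t : R) (K : nat -> R) (t' : S) (K' : nat -> S).
Hypotheses (ft : f t = t') (fK : forall n, f (K n) = K' n).

Lemma rmorph_entry z i A : f (entry t K z i A) = entry t' K' (f z) i A.
Proof.
rewrite /entry /term; case: ifP => _; first exact: rmorph0.
by rewrite rmorphM /= rmorph_qp !rmorphM !rmorphXn /= ft fK.
Qed.

Lemma rmorph_det_entry_mx m (b : 'I_m -> nat) z :
  f (\det (entry_mx t K b z)) = \det (entry_mx t' K' b (f z)).
Proof.
rewrite -det_map_mx; congr (\det _); apply/matrixP => i j.
by rewrite !mxE rmorph_entry.
Qed.

Lemma rmorph_prod_factor m (b : 'I_m -> nat) z :
  f (prod_factor t b z) = prod_factor t' b (f z).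
Proof.
rewrite rmorph_prod; apply: eq_bigr => k _.
by rewrite rmorph_qp rmorphM rmorphXn /= ft.
Qed.

End RingMorphisms.

Section Uniqueness.
Variables (F : fieldType) (c : F).

Lemma coef_comp_scale (p : {poly F}) n : (p \Po ('X * c%:P))`_n = p`_n * c ^+ n.
Proof.
rewrite coef_comp_poly.
under eq_bigr => i _ do rewrite exprMn -rmorphXn coefMC coefXn mulrA.
case: (ltnP n (size p)) => hn.
  rewrite (bigD1 (Ordinal hn)) //= eqxx mulr1 big1 ?addr0 // => i /eqP hi.
  have -> : (n == i) = false by apply/eqP => e; apply: hi; apply: val_inj.
  by rewrite mulr0 mul0r.
rewrite big1 ?nth_default ?mul0r // => i _.
have -> : (n == i) = false by apply/eqP => e; have := ltn_ord i; lia.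
by rewrite mulr0 mul0r.
Qed.

Hypothesis c_not_root : forall d, (0 < d)%N -> c ^+ d != 1.

(* If c is not a root of unity, the q-difference equation
   h(X) C(X) = L(X) h(c X) with C(0) = L(0) = 1 only has the solution h = 0
   once h(0) = 0: comparing coefficients of X^(d+1) gives
   h_(d+1) (1 - c^(d+1)) = 0 by induction on d. *)
Lemma qdiff_eq_zero (h C L : {poly F}) :
  C`_0 = 1 -> L`_0 = 1 -> h`_0 = 0 -> h * C = L * (h \Po ('X * c%:P)) -> h = 0.
Proof.
move=> C0 L0 h0 E.
suff low_zero : forall d k, (k <= d)%N -> h`_k = 0.
  by apply/polyP => k; rewrite coef0 (low_zero k k (leqnn k)).
elim=> [|d IH] k hk; first by have -> : k = 0%N by lia.
case: (ltnP k d.+1) => hk'; first by apply: IH; lia.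
have -> : k = d.+1 by lia.
have lhs : (h * C)`_d.+1 = h`_d.+1.
  rewrite coefM big_ord_recr /= subnn C0 mulr1 big1 ?add0r //.
  by move=> i _; rewrite IH ?mul0r //; have := ltn_ord i; lia.
have rhs : (L * (h \Po ('X * c%:P)))`_d.+1 = h`_d.+1 * c ^+ d.+1.
  rewrite coefM big_ord_recl /= subn0 L0 mul1r coef_comp_scale big1 ?addr0 //.
  move=> i _; rewrite /bump /= coef_comp_scale IH ?mul0r ?mulr0 //.
  by have := ltn_ord i; lia.
have : h`_d.+1 * (1 - c ^+ d.+1) = 0 by rewrite mulrBr mulr1 -rhs -E lhs subrr.
move/eqP; rewrite mulf_eq0 subr_eq0 [1 == _]eq_sym (negbTE (c_not_root (ltn0Sn d))) orbF.
by move/eqP.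
Qed.

Lemma qdiff_eq_unique (D P C L : {poly F}) :
  C`_0 = 1 -> L`_0 = 1 -> P`_0 = 1 ->
  D * C = L * (D \Po ('X * c%:P)) -> P * C = L * (P \Po ('X * c%:P)) ->
  D = P * (D`_0)%:P.
Proof.
move=> C0 L0 P0 ED EP; apply/eqP; rewrite -subr_eq0; apply/eqP.
apply: (qdiff_eq_zero C0 L0).
  by rewrite coefB coefMC P0 mul1r subrr.
rewrite comp_polyB comp_polyM comp_polyC mulrBl mulrBr ED.
by rewrite [P * _ * C]mulrAC EP -mulrA.
Qed.

End Uniqueness.

Lemma qv_expr_neq1 k : (0 < k)%N -> qv ^+ k != 1.
Proof.
move=> k_gt0; rewrite /qv -tofracXn -tofrac1 tofrac_eq.
apply/eqP => /(congr1 (fun p : {poly rat} => size p)).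
by rewrite size_polyXn size_poly1; case: k k_gt0.
Qed.

Definition inv_qfact (n : nat) : RF := (qpoch qv qv n)^-1.

Lemma inv_qfact_rec p :
  inv_qfact p = inv_qfact p.+2 * ((1 - qv ^+ p.+1) * (1 - qv ^+ p.+2)).
Proof.
have nz k : 1 - qv ^+ k.+1 != 0 by rewrite subr_eq0 eq_sym qv_expr_neq1.
have qpochE n : qpoch qv qv n = qp qv qv n by [].
rewrite /inv_qfact !qpochE !qpSr -!exprS !invfM -!mulrA.
by rewrite [X in _ * (_ * X)]mulrCA mulVf ?nz // mulr1 mulVf ?nz // mulr1.
Qed.

Section PolynomialIdentity.
Variables (m : nat) (b : 'I_m -> nat).
Hypotheses (b_le : forall j, (b j <= 2 * m)%N)
           (b_ge : forall k : 'I_m, (2 * k.+1 <= (b k).+1)%N).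

(* Work over {poly RF}, the variable X standing for z = q^(2x). *)
Let t : {poly RF} := qv%:P.
Let K (n : nat) : {poly RF} := (inv_qfact n)%:P.

Lemma poly_inv_qfact_rec p : K p = K p.+2 * ((1 - t ^+ p.+1) * (1 - t ^+ p.+2)).
Proof. by rewrite /K inv_qfact_rec !rmorphM !rmorphB !rmorph1 !rmorphXn. Qed.

Lemma comp_det_entry_mx c :
  \det (entry_mx t K b 'X) \Po ('X * c%:P) = \det (entry_mx t K b ('X * c%:P)).
Proof.
rewrite -[in RHS](comp_polyX ('X * c%:P)).
by apply: (rmorph_det_entry_mx (f := comp_poly _)) => [|n]; rewrite /= comp_polyC.
Qed.

Lemma comp_prod_factor c :
  prod_factor t b 'X \Po ('X * c%:P) = prod_factor t b ('X * c%:P).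
Proof.
rewrite -[in RHS](comp_polyX ('X * c%:P)).
by apply: (rmorph_prod_factor (f := comp_poly _)); rewrite /= comp_polyC.
Qed.

Lemma horner_det_entry_mx c :
  (\det (entry_mx t K b 'X)).[c] = \det (entry_mx qv inv_qfact b c).
Proof.
rewrite -horner_evalE (rmorph_det_entry_mx (t' := qv) (K' := inv_qfact)).
- by rewrite /= horner_evalE hornerX.
- by rewrite /= horner_evalE hornerC.
- by move=> n; rewrite /= horner_evalE hornerC.
Qed.

Lemma horner_prod_factor c : (prod_factor t b 'X).[c] = prod_factor qv b c.
Proof.
rewrite -horner_evalE (rmorph_prod_factor (t' := qv)).
- by rewrite /= horner_evalE hornerX.
- by rewrite /= horner_evalE hornerC.
Qed.

Lemma det_entry_mx_poly :
  \det (entry_mx t K b 'X) = prod_factor t b 'X * (\det (entry_mx qv inv_qfact b 0))%:P.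
Proof.
have tX2 : 'X * t ^+ 2 = 'X * (qv ^+ 2)%:P by rewrite rmorphXn.
have C0 : (\prod_(j < m) col_factor t 'X (b j))`_0 = 1.
  rewrite coef0_prod big1 // => j _.
  by rewrite /col_factor coef0M !coefB coef1 !coefXM /= subr0 mulr1.
have L0 : (\prod_(i < m) diag_coef t 'X i.+1)`_0 = 1.
  rewrite coef0_prod big1 // => i _.
  by rewrite /diag_coef coef0M !coefB coef1 !coefXM /= subr0 mulr1.
have P0 : (prod_factor t b 'X)`_0 = 1.
  rewrite -horner_coef0 horner_prod_factor /prod_factor big1 // => k _.
  by rewrite mul0r qp_zero.
rewrite -(horner_det_entry_mx 0) horner_coef0.
apply: (qdiff_eq_unique (c := qv ^+ 2)) C0 L0 P0 _ _.
- by move=> d d_gt0; rewrite -exprM qv_expr_neq1 // muln_gt0.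
- by rewrite comp_det_entry_mx -tX2 (det_entry_mx_funeq poly_inv_qfact_rec).
- by rewrite comp_prod_factor -tX2 prod_factor_funeq.
Qed.

End PolynomialIdentity.

Section Admissible.
Variables (m : nat) (a : 'I_m -> int).
Hypothesis a_ge0 : forall j, 0 <= a j.

Let b (j : 'I_m) : nat := absz (a j).

Lemma expo_lt0 (i j : 'I_m) : (expo a i j < 0) = ((b j).+1 < 2 * i.+1)%N.
Proof. by rewrite /expo /b; have := a_ge0 j; lia. Qed.

Lemma absz_expo (i j : 'I_m) : (2 * i.+1 <= (b j).+1)%N ->
  absz (expo a i j) = ((b j).+1 - 2 * i.+1)%N.
Proof.
rewrite /expo /b => hij.
have -> : a j + 1 - 2 * (i.+1)%:Z = ((`|a j|%N).+1 - 2 * i.+1)%N%:Z.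
  by have := a_ge0 j; lia.
by [].
Qed.

Lemma mmat_entry_mx x : mmat a x = entry_mx qv inv_qfact b (qv ^+ (2 * x)).
Proof.
apply/matrixP => i j; rewrite !mxE /entry expo_lt0; case: ifPn => // hij.
rewrite absz_expo 1?leqNgt //.
by rewrite /term -exprD addnC.
Qed.

Lemma smat_entry_mx : smat a = entry_mx qv inv_qfact b 0.
Proof.
apply/matrixP => i j; rewrite !mxE /entry expo_lt0; case: ifPn => // hij.
by rewrite absz_expo 1?leqNgt // /term mul0r qp_zero mul1r.
Qed.

Lemma prod_qpoch_prod_factor x : (forall k : 'I_m, (2 * k.+1 <= (b k).+1)%N) ->
  \prod_(k < m) qpoch (qv ^+ (2 * x + 2 * k.+1)) qv (absz (a k - 2 * (k.+1)%:Z + 1)) =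
  prod_factor qv b (qv ^+ (2 * x)).
Proof.
move=> b_ge; apply: eq_bigr => k _.
have -> : a k - 2 * (k.+1)%:Z + 1 = expo a k k by rewrite /expo; lia.
by rewrite absz_expo // exprD.
Qed.

End Admissible.

Theorem theorem1 (m : nat) (a : 'I_m -> int) (x : nat) :
  (0 < m)%N -> admissible a ->
  \det (mmat a x) =
    (\prod_(k < m)
       qpoch (qv ^+ (2 * x + 2 * k.+1)) qv (absz (a k - 2 * (k.+1)%:Z + 1)))
    * \det (smat a).
Proof.
move=> _ [_ a_bounds].
have a_ge0 j : 0 <= a j by have := a_bounds j; lia.
have b_le j : (absz (a j) <= 2 * m)%N by have := a_bounds j; lia.
have b_ge (k : 'I_m) : (2 * k.+1 <= (absz (a k)).+1)%N by have := a_bounds k; lia.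
rewrite mmat_entry_mx // smat_entry_mx // prod_qpoch_prod_factor //.
rewrite -horner_det_entry_mx (det_entry_mx_poly b_le b_ge).
by rewrite hornerM hornerC horner_prod_factor.
Qed.
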